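(* Let $n\geq 6$ and $k\in\{3,\dots,n-3\}$. Every $k$-spectrally monomorphic $n$-tournament is transitive.
   Context: An $n$-tournament is a digraph on $n$ vertices in which every pair of distinct vertices is joined by exactly one arc. Its adjacency matrix $A=(a_{ij})$ (w.r.t. an ordering $v_1,\dots,v_n$) has $a_{ij}=1$ if $v_i$ dominates $v_j$ and $0$ otherwise. A tournament is $k$-spectrally monomorphic if all the $k\times k$ principal submatrices of its adjacency matrix have the same characteristic polynomial. A tournament is transitive if whenever $u$ dominates $v$ and $v$ dominates $w$, then $u$ dominates $w$. *)

From mathcomp Require Import all_boot all_order all_algebra.
Set Implicit Arguments. Unset Strict Implicit. Unset Printing Implicit Defensive.
Import GRing.Theory.
Local Open Scope ring_scope.

Definition is_tournament (n : nat) (dom : rel 'I_n) : Prop :=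
  (forall i, ~~ dom i i) /\
  (forall i j, i != j -> (dom i j (+) dom j i)).

Definition adj_mx (n : nat) (dom : rel 'I_n) : 'M[int]_n :=
  \matrix_(i, j) (dom i j)%:R.

(* The k x k principal submatrix of A on the rows/columns selected by
   the strictly increasing map f : 'I_k -> 'I_n (i.e. by a k-subset). *)
Definition principal_submx (n k : nat) (A : 'M[int]_n) (f : 'I_k -> 'I_n)
  : 'M[int]_k := mxsub f f A.

Definition strictly_increasing (n k : nat) (f : 'I_k -> 'I_n) : Prop :=
  forall a b : 'I_k, (a < b)%N -> (f a < f b)%N.

Definition k_spectrally_monomorphic (n k : nat) (dom : rel 'I_n) : Prop :=
  forall f g : 'I_k -> 'I_n, strictly_increasing f -> strictly_increasing g ->
    char_poly (principal_submx (adj_mx dom) f) =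
    char_poly (principal_submx (adj_mx dom) g).

Definition transitive_tournament (n : nat) (dom : rel 'I_n) : Prop :=
  forall u v w, dom u v -> dom v w -> dom u w.

From mathcomp Require Import all_boot all_order all_algebra.
From mathcomp Require Import algC spectral.
From mathcomp Require Import ring zify.
From Stdlib Require Import Lia.
Set Implicit Arguments. Unset Strict Implicit. Unset Printing Implicit Defensive.
Import Order.TTheory GRing.Theory Num.Theory.

(* The trace of the cube of the adjacency matrix of a tournament on K counts
   its cyclic triangles (three times each), and this trace is the sum of the
   cubes of the eigenvalues, hence is determined by the characteristic
   polynomial.  So k-spectral monomorphy makes the number c(K) of cyclic
   triangles constant on k-sets.  Averaging over the k-subsets of M gives
   C(|M|-3, k-3) c(M) = C(|M|, k) c_k, so c(M) only depends on |M| once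
   |M| >= k; this applies to complements of sets of at most 3 vertices.
   Taking differences of such counts shows that, for fixed vertices v, w,
   whether {v, w, x} is cyclic does not depend on x.  Now if u -> v -> w but
   w -> u, then for any fourth vertex z both {u, v, z} and {v, w, z} are
   cyclic, which forces v -> z and z -> v. *)

Lemma card_draws_supset (T : finType) (Y M : {set T}) k :
  Y \subset M -> #|Y| <= k ->
  #|[set K : {set T} | (Y \subset K) && (K \subset M) && (#|K| == k)]| =
  'C(#|M| - #|Y|, k - #|Y|).
Proof.
move=> sYM le_Yk; rewrite -cardsDS // -cards_draws.
have setUDK (L : {set T}) : L \subset M :\: Y -> (Y :|: L) :\: Y = L.
  rewrite subsetD => /andP[_ disj_LY].
  by rewrite setDUl setDv set0U; apply/setDidPl.
rewrite -[RHS](@card_in_imset _ _ (setU Y)); last first.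
  move=> L1 L2; rewrite !inE => /andP[sL1 _] /andP[sL2 _] eqL12.
  by rewrite -(setUDK _ sL1) eqL12 setUDK.
apply: eq_card => K; rewrite inE; apply/idP/imsetP => [|[L]].
  case/andP=> /andP[sYK sKM] /eqP cardK; exists (K :\: Y).
    by rewrite inE setSD //= cardsDS // cardK.
  by rewrite -{1}(setID K Y) (setIidPr sYK).
rewrite inE => /andP[sLMY /eqP cardL] ->.
have cardYL : #|Y :|: L| = #|Y| + #|L|.
  have := cardsDS (subsetUl Y L); rewrite setUDK // => ->.
  by rewrite subnKC // subset_leq_card // subsetUl.
rewrite subsetUl subUset sYM (subset_trans sLMY (subsetDl _ _)) cardYL cardL /=.
by rewrite subnKC.
Qed.

Lemma cards3 (T : finType) (a b c : T) :
  a != b -> b != c -> c != a -> #|[set a; b; c]| = 3.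
Proof.
by move=> ab bc ca; rewrite -setUA cardsU1 cards2 bc !inE negb_or ab (eq_sym a c) ca.
Qed.

Lemma setCU1r (T : finType) (A : {set T}) x : ~: (A :|: [set x]) = ~: A :\ x.
Proof. by rewrite setDE setCU. Qed.

Local Open Scope ring_scope.

Lemma mxtrace_cubeE (R : comNzRingType) n (M : 'M[R]_n) :
  \tr (M *m M *m M) = \sum_i \sum_j \sum_l M i j * M j l * M l i.
Proof.
rewrite /mxtrace; apply: eq_bigr => i _; rewrite !mxE exchange_big /=.
by apply: eq_bigr => l _; rewrite !mxE big_distrl.
Qed.

Section TriangularProduct.
Variables (R : comNzRingType) (n : nat).
Implicit Types A B : 'M[R]_n.

Lemma mulmx_trig A B : is_trig_mx A -> is_trig_mx B ->
  is_trig_mx (A *m B) /\ forall i, (A *m B) i i = A i i * B i i.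
Proof.
move=> /is_trig_mxP At /is_trig_mxP Bt; split.
  apply/is_trig_mxP => i j lt_ij; rewrite mxE big1 // => l _.
  case: (ltnP i l) => [/At -> | le_li]; first by rewrite mul0r.
  by rewrite Bt ?mulr0 // (leq_ltn_trans le_li).
move=> i; rewrite mxE (bigD1 i) //= big1 ?addr0 // => l neq_li.
case: (ltngtP i l) => [/At -> | /Bt -> | /val_inj eq_il]; rewrite ?mul0r ?mulr0 //.
by rewrite eq_il eqxx in neq_li.
Qed.

Lemma mxtrace_cube_trig A : is_trig_mx A -> \tr (A *m A *m A) = \sum_i A i i ^+ 3.
Proof.
move=> At; have [A2t A2ii] := mulmx_trig At At; have [_ A3ii] := mulmx_trig A2t At.
by apply: eq_bigr => i _; rewrite A3ii A2ii -expr2 -exprSr.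
Qed.

End TriangularProduct.

Section Similarity.
Variables (F : fieldType) (n : nat) (P : 'M[F]_n).
Hypothesis P_unit : P \in unitmx.

Lemma char_poly_conj A : char_poly (P *m A *m invmx P) = char_poly A.
Proof.
rewrite /char_poly; have -> : char_poly_mx (P *m A *m invmx P) =
    map_mx polyC P *m char_poly_mx A *m map_mx polyC (invmx P).
  rewrite /char_poly_mx mulmxBr mulmxBl !map_mxM; congr (_ - _).
  by rewrite scalar_mxC mul_scalar_mx -scalemxAl -map_mxM mulmxV // map_mx1 scalemx1.
rewrite !det_mulmx !det_map_mx mulrC mulrA -rmorphM -det_mulmx.
by rewrite mulVmx // det1 rmorph1 mul1r.
Qed.

Lemma mxtrace_cube_conj A :
  \tr ((P *m A *m invmx P) *m (P *m A *m invmx P) *m (P *m A *m invmx P)) =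
  \tr (A *m A *m A).
Proof.
have conjM B C : (P *m B *m invmx P) *m (P *m C *m invmx P) = P *m (B *m C) *m invmx P.
  by rewrite -!mulmxA (mulmxA (invmx P)) mulVmx // mul1mx !mulmxA.
by rewrite !conjM mxtrace_mulC (mulmxA (invmx P)) mulVmx // mul1mx.
Qed.

End Similarity.

Lemma mxtrace_cube_char_poly_algC n (A B : 'M[algC]_n) : (0 < n)%N ->
  char_poly A = char_poly B -> \tr (A *m A *m A) = \tr (B *m B *m B).
Proof.
move=> n_gt0 eqAB.
have eigen (M : 'M[algC]_n) : exists s : seq algC,
    char_poly M = \prod_(x <- s) ('X - x%:P) /\
    \tr (M *m M *m M) = \sum_(x <- s) x ^+ 3.
  have [P /unitarymx_unit P_unit] := Schur M n_gt0.
  rewrite /similar_to conjumx // => Tt.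
  exists [seq (P *m M *m invmx P) i i | i <- index_enum 'I_n].
  rewrite -(char_poly_conj P_unit) (char_poly_trig Tt) -(mxtrace_cube_conj P_unit).
  by rewrite (mxtrace_cube_trig Tt) !big_map.
have [s [chiA trA]] := eigen A; have [t [chiB trB]] := eigen B.
by rewrite trA trB; apply/perm_big/prod_XsubC_eq; rewrite -chiA -chiB.
Qed.

Lemma mxtrace_cube_char_poly_int n (A B : 'M[int]_n) : (0 < n)%N ->
  char_poly A = char_poly B -> \tr (A *m A *m A) = \tr (B *m B *m B).
Proof.
move=> n_gt0 eqAB; apply: (@intr_inj algC).
rewrite -!trace_map_mx !map_mxM; apply: mxtrace_cube_char_poly_algC => //.
by rewrite -!map_char_poly eqAB.
Qed.

Section TripleCycles.
Variables (T : finType) (dom : rel T).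
Implicit Types (a b c x z : T) (X K M : {set T}).

Definition cycle3 a b c : int := (dom a b)%:R * (dom b c)%:R * (dom c a)%:R.

Definition cycles3 X : int :=
  \sum_(a in X) \sum_(b in X) \sum_(c in X) cycle3 a b c.

Definition cycles3_at x X : int := \sum_(b in X) \sum_(c in X) cycle3 x b c.

Definition cyclic_triangle a b c : int := cycle3 a b c + cycle3 a c b.

Lemma cycle3_rot a b c : cycle3 a b c = cycle3 b c a.
Proof. by rewrite /cycle3 -mulrA mulrC. Qed.

Lemma cycles3_indicator K : cycles3 K =
  \sum_a \sum_b \sum_c ([set a; b; c] \subset K)%:R * cycle3 a b c.
Proof.
have sum_in (F : T -> int) : \sum_(a in K) F a = \sum_a (a \in K)%:R * F a.
  by rewrite big_mkcond; apply: eq_bigr => a _; case: (a \in K); rewrite ?mul1r ?mul0r.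
rewrite /cycles3 sum_in; apply: eq_bigr => a _; rewrite sum_in mulr_sumr.
apply: eq_bigr => b _; rewrite sum_in !mulr_sumr; apply: eq_bigr => c _.
rewrite !subUset !sub1set.
by case: (a \in K) (b \in K) (c \in K) => [] [] []; rewrite ?mul1r ?mul0r.
Qed.

Hypothesis dom_irr : irreflexive dom.

Lemma cycle3_aac a c : cycle3 a a c = 0.
Proof. by rewrite /cycle3 dom_irr !mul0r. Qed.

Lemma cycle3_abb a b : cycle3 a b b = 0.
Proof. by rewrite /cycle3 dom_irr mulr0 mul0r. Qed.

Lemma cycle3_aba a b : cycle3 a b a = 0.
Proof. by rewrite cycle3_rot cycle3_abb. Qed.

Lemma card_cycle3_support a b c : cycle3 a b c != 0 -> #|[set a; b; c]| = 3%N.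
Proof.
rewrite /cycle3; have [<-|ab] := eqVneq a b; first by rewrite dom_irr !mul0r.
have [<-|bc] := eqVneq b c; first by rewrite dom_irr mulr0 mul0r.
have [<-|ca] := eqVneq c a; first by rewrite dom_irr mulr0.
by rewrite cards3.
Qed.

Lemma sum_cycle3_setU1 a x X : x \notin X ->
  \sum_(b in x |: X) \sum_(c in x |: X) cycle3 a b c =
  \sum_(c in X) cycle3 a x c + \sum_(b in X) cycle3 a b x +
  \sum_(b in X) \sum_(c in X) cycle3 a b c + cycle3 a x x.
Proof.
move=> xX; rewrite big_setU1 // big_setU1 //=.
under [in X in _ + X]eq_bigr => b _ do rewrite big_setU1 //=.
by rewrite big_split /=; ring.
Qed.

Lemma cycles3_setD1 x M : x \in M ->
  cycles3 M = cycles3 (M :\ x) + 3%:R * cycles3_at x (M :\ x).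
Proof.
move=> xM; rewrite -{1}(setD1K xM) /cycles3 /cycles3_at.
have xMx : x \notin M :\ x by rewrite !inE eqxx.
rewrite big_setU1 //= !sum_cycle3_setU1 //.
under eq_bigr => a _ do rewrite sum_cycle3_setU1 //.
rewrite cycle3_aac !big_split /=.
rewrite big1 => [|c _]; last exact: cycle3_aac.
rewrite [\sum_(b in _) cycle3 x b x]big1 => [|b _]; last exact: cycle3_aba.
rewrite [\sum_(a in _) cycle3 a x x]big1 => [|a _]; last exact: cycle3_abb.
set P := \sum_(b in M :\ x) \sum_(c in M :\ x) cycle3 x b c.
have -> : \sum_(a in M :\ x) \sum_(c in M :\ x) cycle3 a x c = P.
  rewrite exchange_big; apply: eq_bigr => b _.
  by apply: eq_bigr => c _; rewrite cycle3_rot.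
have -> : \sum_(a in M :\ x) \sum_(b in M :\ x) cycle3 a b x = P.
  by apply: eq_bigr => a _; apply: eq_bigr => b _; rewrite [RHS]cycle3_rot.
ring.
Qed.

Lemma cycles3_at_setD1 x z X : z \in X ->
  cycles3_at x X = cycles3_at x (X :\ z) + \sum_(c in X :\ z) cyclic_triangle x z c.
Proof.
move=> zX; rewrite -{1}(setD1K zX) /cycles3_at sum_cycle3_setU1 ?setD11 //.
by rewrite cycle3_abb big_split /=; ring.
Qed.

Lemma sum_draws_supset3 (Y M : {set T}) k : #|Y| = 3%N -> (3 <= k)%N ->
  \sum_(K : {set T} | (K \subset M) && (#|K| == k)) (Y \subset K)%:R =
  ('C(#|M| - 3, k - 3) * (Y \subset M))%:R :> int.
Proof.
move=> cardY k_ge3; rewrite -natr_sum -big_mkcondr /= sum1dep_card.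
have [sYM|nsYM] := boolP (Y \subset M).
  rewrite muln1 -cardY -card_draws_supset ?cardY //; congr (_%:R).
  by apply: eq_card => K; rewrite !inE andbC andbA.
rewrite /= muln0 eq_card0 // => K; rewrite !inE.
apply/negP => /andP[/andP[sKM _] sYK]; case/negP: nsYM.
exact: subset_trans sYK sKM.
Qed.

Lemma sum_cycles3_draws M k : (3 <= k)%N ->
  \sum_(K : {set T} | (K \subset M) && (#|K| == k)) cycles3 K =
  'C(#|M| - 3, k - 3)%:R * cycles3 M.
Proof.
move=> k_ge3; under eq_bigr => K _ do rewrite cycles3_indicator.
rewrite cycles3_indicator mulr_sumr exchange_big /=; apply: eq_bigr => a _.
rewrite mulr_sumr exchange_big /=; apply: eq_bigr => b _.
rewrite mulr_sumr exchange_big /=; apply: eq_bigr => c _.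
have [cyc0|/card_cycle3_support cardY] := eqVneq (cycle3 a b c) 0.
  by rewrite cyc0 big1 ?mulr0 // => K _; rewrite mulr0.
by rewrite -mulr_suml sum_draws_supset3 // natrM mulrA.
Qed.

Lemma cycles3_card_invariant k : (3 <= k)%N ->
  (forall K K', #|K| = k -> #|K'| = k -> cycles3 K = cycles3 K') ->
  forall M M', #|M| = #|M'| -> (k <= #|M|)%N -> cycles3 M = cycles3 M'.
Proof.
move=> k_ge3 cycles3_k M M' eqMM' le_kM.
have [K0 cardK0] : exists K0, #|K0| = k.
  have : (0 < #|[set K : {set T} | K \subset M & #|K| == k]|)%N.
    by rewrite cards_draws bin_gt0.
  by case/card_gt0P => K; rewrite inE => /andP[_ /eqP cardK]; exists K.
have avg (N : {set T}) : (k <= #|N|)%N ->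
    'C(#|N| - 3, k - 3)%:R * cycles3 N = 'C(#|N|, k)%:R * cycles3 K0.
  move=> le_kN; rewrite -sum_cycles3_draws // -cards_draws -sum1_card.
  rewrite natr_sum mulr_suml.
  apply: eq_big => [K | K /andP[_ /eqP cardK]]; first by rewrite inE.
  by rewrite mul1r (cycles3_k K K0).
apply: (@mulfI _ 'C(#|M| - 3, k - 3)%:R).
  by rewrite pnatr_eq0 -lt0n bin_gt0 leq_sub2r.
by rewrite avg // eqMM' -avg // -eqMM'.
Qed.

End TripleCycles.

Section Complements.
Variables (T : finType) (dom : rel T).
Hypothesis dom_irr : irreflexive dom.
Hypothesis cycles3_cardC : forall A B : {set T}, #|A| = #|B| -> (#|A| <= 3)%N ->
  cycles3 dom (~: A) = cycles3 dom (~: B).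

Lemma cycles3_at_pair u v u' v' : u != v -> u' != v' ->
  cycles3_at dom v (~: [set u; v]) = cycles3_at dom v' (~: [set u'; v']).
Proof.
have peel a b : a != b -> cycles3 dom (~: [set a]) =
    cycles3 dom (~: [set a; b]) + 3%:R * cycles3_at dom b (~: [set a; b]).
  by move=> ab; rewrite setCU1r; apply: cycles3_setD1; rewrite // !inE eq_sym.
move=> uv u'v'; have := peel u v uv.
rewrite (@cycles3_cardC [set u] [set u']) ?cards1 //.
rewrite (@cycles3_cardC [set u; v] [set u'; v']) ?cards2 ?uv ?u'v' //.
by rewrite (peel u' v') // => /addrI /mulfI ->.
Qed.

Lemma cycles3_at_triple a b c a' b' c' :
  a != b -> b != c -> c != a -> a' != b' -> b' != c' -> c' != a' ->
  cycles3_at dom c (~: [set a; b; c]) = cycles3_at dom c' (~: [set a'; b'; c']).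
Proof.
have peel x y z : x != y -> y != z -> z != x -> cycles3 dom (~: [set x; y]) =
    cycles3 dom (~: [set x; y; z]) + 3%:R * cycles3_at dom z (~: [set x; y; z]).
  move=> xy yz zx; rewrite [~: [set x; y; z]]setCU1r; apply: cycles3_setD1 => //.
  by rewrite !inE negb_or zx eq_sym yz.
move=> ab bc ca a'b' b'c' c'a'; have := peel a b c ab bc ca.
rewrite (@cycles3_cardC [set a; b] [set a'; b']) ?cards2 ?ab ?a'b' //.
rewrite (@cycles3_cardC [set a; b; c] [set a'; b'; c']) ?cards3 //.
by rewrite (peel a' b' c') // => /addrI /mulfI ->.
Qed.

Lemma cyclic_triangle_const v w a a' : v != w ->
  a != v -> a != w -> a' != v -> a' != w ->
  cyclic_triangle dom v w a = cyclic_triangle dom v w a'.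
Proof.
move=> vw.
have expand x : x != v -> x != w -> cyclic_triangle dom v w x =
    \sum_(c in ~: [set v; w]) cyclic_triangle dom v w c
    - cycles3_at dom v (~: [set x; v]) + cycles3_at dom v (~: [set x; w; v]).
  move=> xv xw.
  have x_out : x \in ~: [set v; w] by rewrite !inE negb_or xv xw.
  have w_out : w \in ~: [set x; v] by rewrite !inE negb_or eq_sym xw eq_sym vw.
  have setC_xwv (A : {set T}) : A = [set v; w; x] \/ A = [set x; v; w] ->
      ~: A = ~: [set x; w; v].
    by case=> ->; apply/setP => y; rewrite !inE;
      case: (y == x) (y == v) (y == w) => [] [] [].
  rewrite (big_setD1 x x_out) /= (cycles3_at_setD1 dom_irr v w_out) -!setCU1r.
  rewrite !setC_xwv; [ring | by right | by left].
move=> av aw a'v a'w; rewrite (expand a) // (expand a') //.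
rewrite (@cycles3_at_pair a v a' v) //.
by rewrite (@cycles3_at_triple a w v a' w v) // eq_sym.
Qed.

End Complements.

Section Tournament.
Variables (T : finType) (dom : rel T).
Hypothesis dom_irr : irreflexive dom.
Hypothesis dom_tour : forall a b, a != b -> dom a b (+) dom b a.

Lemma tournament_asym a b : dom a b -> ~~ dom b a.
Proof.
have [<-|ab] := eqVneq a b; first by rewrite dom_irr.
by move=> dab; have := dom_tour ab; rewrite dab; case: (dom b a).
Qed.

Lemma cyclic_triangle_arc a b c : dom a b ->
  cyclic_triangle dom a b c = (dom b c && dom c a)%:R.
Proof.
move=> dab; rewrite /cyclic_triangle /cycle3 dab (negbTE (tournament_asym dab)).
by case: (dom b c) (dom c a) => [] []; rewrite ?mulr0 ?mul0r.
Qed.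

Lemma tournament_transitive : (3 < #|T|)%N ->
  (forall A B : {set T}, #|A| = #|B| -> (#|A| <= 3)%N ->
     cycles3 dom (~: A) = cycles3 dom (~: B)) ->
  forall u v w, dom u v -> dom v w -> dom u w.
Proof.
move=> T_gt3 cycles3_cardC u v w duv dvw; apply/negPn/negP => nduw.
have uv : u != v by apply: contraTneq duv => ->; rewrite dom_irr.
have vw : v != w by apply: contraTneq dvw => ->; rewrite dom_irr.
have uw : u != w by apply: contraTneq dvw => <-; apply: tournament_asym.
have wu : w != u by rewrite eq_sym.
have dwu : dom w u by have := dom_tour uw; rewrite (negbTE nduw).
have [z] : exists z, z \in ~: [set u; v; w].
  apply/card_gt0P; have := cardsC [set u; v; w].
  rewrite cards3 //; lia.
rewrite !inE !negb_or => /andP[/andP[zu zv] zw].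
have cyc_uv := cyclic_triangle_const dom_irr cycles3_cardC uv (a := w) (a' := z).
have cyc_vw := cyclic_triangle_const dom_irr cycles3_cardC vw (a := u) (a' := z).
rewrite !cyclic_triangle_arc // duv dvw dwu in cyc_uv cyc_vw.
have wv : w != v by rewrite eq_sym.
have dvz : dom v z.
  by move/eqP: (cyc_uv wu wv zu zv); rewrite eqr_nat; case: (dom v z).
have dzv : dom z v.
  by move/eqP: (cyc_vw uv uw zv zw); rewrite eqr_nat andbC; case: (dom z v).
by move: (tournament_asym dvz); rewrite dzv.
Qed.

End Tournament.

Lemma enum_val_increasing n (K : {set 'I_n}) :
  strictly_increasing (fun i : 'I_#|K| => enum_val i).
Proof.
move=> a b lt_ab.
have ltn_val_trans : transitive (relpre (val : 'I_n -> nat) ltn).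
  by move=> x y z; apply: ltn_trans.
have sorted_K : sorted (relpre val ltn) (enum K).
  have : sorted ltn (map val (enum 'I_n)) by rewrite val_enum_ord iota_ltn_sorted.
  rewrite sorted_map => sorted_I; rewrite /enum_mem -enumT; exact: sorted_filter.
have := sorted_ltn_nth ltn_val_trans (enum_val a) sorted_K.
move=> /(_ a b); rewrite !inE -cardE !ltn_ord => /(_ isT isT lt_ab).
by rewrite -!enum_val_nth.
Qed.

Lemma mxtrace_cube_adj_submx n (dom : rel 'I_n) (K : {set 'I_n}) k : #|K| = k ->
  exists2 f : 'I_k -> 'I_n, strictly_increasing f &
    \tr (principal_submx (adj_mx dom) f *m principal_submx (adj_mx dom) f
         *m principal_submx (adj_mx dom) f) = cycles3 dom K.
Proof.
move=> <-; exists (fun i => enum_val i); first exact: enum_val_increasing.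
rewrite mxtrace_cubeE /cycles3 [RHS]big_enum_val; apply: eq_bigr => i _.
rewrite [RHS]big_enum_val; apply: eq_bigr => j _.
rewrite [RHS]big_enum_val; apply: eq_bigr => l _.
by rewrite /principal_submx /cycle3 !mxE.
Qed.

Lemma cycles3_draws_const n k (dom : rel 'I_n) : (0 < k)%N ->
  k_spectrally_monomorphic k dom ->
  forall K K' : {set 'I_n}, #|K| = k -> #|K'| = k -> cycles3 dom K = cycles3 dom K'.
Proof.
move=> k_gt0 mono K K' cardK cardK'.
have [f f_incr <-] := mxtrace_cube_adj_submx dom cardK.
have [g g_incr <-] := mxtrace_cube_adj_submx dom cardK'.
exact/mxtrace_cube_char_poly_int/mono.
Qed.

Theorem proposition3p1 (n k : nat) (dom : rel 'I_n) :
  (6 <= n)%N -> (3 <= k)%N -> (k <= n - 3)%N ->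
  is_tournament dom -> k_spectrally_monomorphic k dom ->
  transitive_tournament dom.
Proof.
(* The hypothesis 6 <= n is implied by 3 <= k <= n - 3. *)
move=> _ k_ge3 k_le [irr tour] mono.
have dom_irr : irreflexive dom by move=> i; apply: negbTE.
have cycles3_k := cycles3_draws_const (leq_trans (ltn0Sn 2) k_ge3) mono.
apply: (tournament_transitive dom_irr tour); first by rewrite card_ord; lia.
move=> A B cardAB A_le3.
have cardC (X : {set 'I_n}) : #|~: X| = (n - #|X|)%N by rewrite cardsCs setCK card_ord.
apply: (cycles3_card_invariant dom_irr k_ge3 cycles3_k); first by rewrite !cardC cardAB.
by rewrite cardC (leq_trans k_le) // leq_sub2l.
Qed.
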